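(* Let $p>1$ be an integer and let $u^{(p)}$ be the fixed point of the substitution $\varphi_p(L)=L^pS$, $\varphi_p(S)=M$, $\varphi_p(M)=L^{p-1}S$. (i) For every factor $\hat v$ of $u^{(p)}$, $|\hat v|_M\le 1+\frac{|\hat v|-1}{p^2+p}$. (ii) If moreover $\hat v$ has a prefix or a suffix of length greater than or equal to $\Delta$ (a nonnegative integer) that contains no letter $M$, then $|\hat v|_M\le\left\lceil\frac{|\hat v|-\Delta}{p^2+p}\right\rceil$.
   Context: $u^{(p)}=\lim_{n\to\infty}\varphi_p^n(L)$. A factor is a finite contiguous subword; $|w|$ is the length and $|w|_M$ the number of occurrences of $M$ in $w$. *)

From HB Require Import structures.
From mathcomp Require Import all_boot all_order all_algebra.
Set Implicit Arguments. Unset Strict Implicit. Unset Printing Implicit Defensive.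
Import Order.TTheory GRing.Theory Num.Theory.

Inductive letter := L | S | M.

Definition isM (a : letter) : bool := if a is M then true else false.

Definition countM (w : seq letter) : nat := count isM w.

Definition phi_letter (p : nat) (a : letter) : seq letter :=
  match a with
  | L => nseq p L ++ [:: S]
  | S => [:: M]
  | M => nseq p.-1 L ++ [:: S]
  end.

Definition phi (p : nat) (w : seq letter) : seq letter :=
  flatten (map (phi_letter p) w).

(* u^(p) = lim_n phi_p^n(L): since phi_p^n(L) is a prefix of phi_p^(n+1)(L)
   and |phi_p^(i+1)(L)| > i, the i-th letter of the limit is the i-th letter
   of phi_p^(i+1)(L). *)
Definition u (p : nat) (i : nat) : letter :=
  nth L (iter i.+1 (phi p) [:: L]) i.

Definition factor (p i n : nat) : seq letter := [seq u p k | k <- iota i n].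

Definition is_factor (p : nat) (v : seq letter) : Prop :=
  exists i n, v = factor p i n.

From mathcomp Require Import all_boot all_order all_algebra.
From mathcomp Require Import zify lra.
Import Order.TTheory GRing.Theory Num.Theory.
Set Implicit Arguments. Unset Strict Implicit. Unset Printing Implicit Defensive.

(* The factor SS never occurs in an image under phi_p, so in an image under
   phi_p^2 every M is preceded by S.  Now phi_p^2 maps L to (L^p S)^p M, M to
   (L^p S)^(p-1) M and S to L^(p-1) S; hence in phi_p^4(L), and so in u^(p),
   consecutive occurrences of M are at distance at least p^2 + p (for an M
   coming from M, the preceding S supplies the missing p letters).  A factor
   with k letters M and with a and b letters before its first and after its
   last M therefore has length at least a + b + 1 + (k-1)(p^2+p), which gives
   both bounds. *)

Definition no_SS (a b : letter) : bool := if (a, b) is (S, S) then false else true.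

Definition S_before_M (a b : letter) : bool :=
  if b is M then (if a is S then true else false) else true.

(* [d] counts the letters read since the last [M]; consecutive occurrences of
   [M] must be at distance at least [N]. *)
Fixpoint spacedM (N d : nat) (w : seq letter) : bool :=
  if w is x :: w' then
    if isM x then (N <= d.+1) && spacedM N 0 w' else spacedM N d.+1 w'
  else true.

Lemma spacedM_catl N d a b : spacedM N d (a ++ b) -> spacedM N d a.
Proof.
elim: a d => [|[] a IH] d //=; first exact: IH; first exact: IH.
by case/andP=> -> /IH.
Qed.

Lemma spacedM_catr N d a b : spacedM N d (a ++ b) -> exists d', spacedM N d' b.
Proof.
elim: a d => [|[] a IH] d /=; [by exists d | exact: IH | exact: IH |].
by case/andP=> _ /IH.
Qed.

Lemma spacedM_nonM N d a w : ~~ has isM a ->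
  spacedM N d (a ++ w) = spacedM N (d + size a) w.
Proof.
elim: a d => [|[] a IH] d //=; rewrite ?addn0 // => /IH ->; by rewrite addSnnS.
Qed.

Lemma spacedM_find N d v : spacedM N d v -> has isM v -> N <= d + (find isM v).+1.
Proof.
elim: v d => [|[] v IH] d //=; try by move=> /IH H /H; lia.
by case/andP; rewrite addn1.
Qed.

Lemma countM_hasNM v : ~~ has isM v -> countM v = 0.
Proof. by rewrite has_count -leqNgt leqn0 => /eqP. Qed.

Lemma spacedM_count N d v : spacedM N d v -> has isM v ->
  countM v * N + find isM v + find isM (rev v) < size v + N.
Proof.
rewrite /countM; elim: v d => [|x v IH] d //=.
rewrite rev_cons -cats1 find_cat has_rev.
case: x => /=; try by move=> /IH H /[dup] Hv /H; rewrite Hv; lia.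
case/andP=> _ Hv _; case Hh: (has isM v).
- by have := IH _ Hv Hh; have := spacedM_find Hv Hh; lia.
- by move: (countM_hasNM (negbT Hh)); rewrite size_rev /countM; lia.
Qed.

Lemma spacedM_count_border N d v Delta : 0 < N -> spacedM N d v ->
  (Delta <= find isM v) || (Delta <= find isM (rev v)) ->
  countM v * N + Delta < size v + N.
Proof.
move=> N_gt0 Hv HDelta; case Hh: (has isM v).
  by have := spacedM_count Hv Hh; lia.
rewrite countM_hasNM ?Hh //.
by move: HDelta; rewrite !hasNfind ?has_rev ?Hh // size_rev orbb; lia.
Qed.

Lemma find_isM_take v k : k <= size v -> countM (take k v) = 0 -> k <= find isM v.
Proof.
move=> Hk Hc; rewrite -(cat_take_drop k v) find_cat.
by rewrite has_count -/(countM _) Hc size_takel // leq_addr.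
Qed.

Lemma find_isM_rev_drop v k : k <= size v -> countM (drop (size v - k) v) = 0 ->
  k <= find isM (rev v).
Proof.
move=> Hk Hc; apply: find_isM_take; first by rewrite size_rev.
by rewrite take_rev /countM count_rev.
Qed.

Lemma phi_cat p a b : phi p (a ++ b) = phi p a ++ phi p b.
Proof. by rewrite /phi map_cat flatten_cat. Qed.

Lemma phi_cons p x w : phi p (x :: w) = phi_letter p x ++ phi p w.
Proof. by []. Qed.

Lemma phi1 p x : phi p [:: x] = phi_letter p x.
Proof. exact: cats0. Qed.

Lemma size_phi p w : size w <= size (phi p w).
Proof.
elim: w => // x w IH; rewrite phi_cons size_cat.
have : 0 < size (phi_letter p x) by case: x => //=; rewrite size_cat addn1.
by move: IH => /=; lia.
Qed.

Lemma phi_nseqL_nonM p k : ~~ has isM (phi p (nseq k L)).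
Proof. by elim: k => //= k IH; rewrite phi_cons !has_cat has_nseq (negbTE IH) /= andbF. Qed.

Lemma size_phi_nseqL p k : size (phi p (nseq k L)) = k * p.+1.
Proof. by elim: k => //= k IH; rewrite phi_cons !size_cat size_nseq IH mulSn addn1. Qed.

Lemma path_S_before_M_phi p x w :
  path no_SS x w -> path S_before_M (last S (phi_letter p x)) (phi p w).
Proof.
have path_LS z k : path S_before_M z (nseq k L ++ [:: S]) by elim: k z => // k IH z /=.
elim: w x => [|y w IH] x //= /andP[Hxy /IH Hw].
rewrite phi_cons cat_path.
have -> : last (last S (phi_letter p x)) (phi_letter p y) = last S (phi_letter p y).
  by case: y {Hxy Hw} => /=; rewrite ?last_cat.
rewrite {}Hw andbT; case: y Hxy => //=.
by case: x => //=; rewrite last_cat.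
Qed.

Section Substitution.

Variable p : nat.
Hypothesis p_gt1 : 1 < p.

Lemma path_no_SS_phi x w : path no_SS x (phi p w).
Proof.
have nseqLS k y : 0 < k -> path no_SS y (nseq k L ++ [:: S]).
  by case: k => // k _; case: y => /=; elim: k.
elim: w x => [|y w IH] x //=; rewrite phi_cons cat_path IH andbT.
by case: y => /=; rewrite ?nseqLS //; [lia | case: x | lia].
Qed.

Lemma spacedM_phi2 x d w : path S_before_M x w -> (if x is S then p <= d else true) ->
  spacedM (p ^ 2 + p) d (phi p (phi p w)).
Proof.
have blockM k rest : phi p (nseq k L ++ [:: S]) ++ rest = phi p (nseq k L) ++ M :: rest.
  by rewrite phi_cat -catA.
elim: w x d => [|y w IH] x d //= /andP[Hxy Hw] Hd.
rewrite phi_cons phi_cat; case: y Hxy Hw => Hxy Hw /=.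
- rewrite blockM spacedM_nonM ?phi_nseqL_nonM //= size_phi_nseqL.
  by rewrite (IH L) // andbT; lia.
- rewrite phi1 spacedM_nonM; last by rewrite has_cat has_nseq /= andbF.
  by rewrite (IH S) // size_cat size_nseq /=; lia.
- rewrite blockM spacedM_nonM ?phi_nseqL_nonM //= size_phi_nseqL.
  by case: x Hd Hxy => // Hd _; rewrite (IH M) // andbT; lia.
Qed.

Definition phi_pow m := iter m (phi p) [:: L].

Lemma phi_powS m : phi_pow m.+1 = phi p (phi_pow m).
Proof. by []. Qed.

Lemma phi_pow_prefix m m' : m <= m' -> exists s, phi_pow m' = phi_pow m ++ s.
Proof.
have step k : exists s, phi_pow k.+1 = phi_pow k ++ s.
  elim: k => [|k [s Hs]].
    by exists (nseq p.-1 L ++ [:: S]); rewrite phi_powS phi1 -{1}(prednK (ltnW p_gt1)).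
  by exists (phi p s); rewrite {1}phi_powS {1}Hs phi_cat -phi_powS.
elim: m' => [|m' IH]; first by rewrite leqn0 => /eqP ->; exists [::]; rewrite cats0.
rewrite leq_eqVlt => /orP[/eqP ->|]; first by exists [::]; rewrite cats0.
by rewrite ltnS => /IH[s Hs]; have [t ->] := step m'; exists (s ++ t); rewrite Hs catA.
Qed.

Lemma size_phi_pow m : m < size (phi_pow m).
Proof.
elim: m => // m IH; have [s Hs] := phi_pow_prefix (leq0n m).
rewrite phi_powS Hs phi_cat size_cat phi1 /= size_cat size_nseq.
by move: IH; rewrite Hs /=; have := size_phi p s; lia.
Qed.

Lemma u_phi_pow i m : i < size (phi_pow m) -> u p i = nth L (phi_pow m) i.
Proof.
move=> Hi; have Hi1 : i < size (phi_pow i.+1) by have := size_phi_pow i.+1; lia.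
have [s1 H1] := phi_pow_prefix (leq_maxl i.+1 m).
have [s2 H2] := phi_pow_prefix (leq_maxr i.+1 m).
have E1 : nth L (phi_pow i.+1) i = nth L (phi_pow (maxn i.+1 m)) i by rewrite H1 nth_cat Hi1.
have E2 : nth L (phi_pow m) i = nth L (phi_pow (maxn i.+1 m)) i by rewrite H2 nth_cat Hi.
by rewrite E2 -E1.
Qed.

Lemma factor_phi_pow i n m : i + n <= size (phi_pow m) ->
  factor p i n = take n (drop i (phi_pow m)).
Proof.
move=> Hs; apply: (@eq_from_nth _ L).
  by rewrite size_map size_iota size_takel // size_drop; lia.
rewrite size_map size_iota => j Hj.
rewrite (nth_map 0) ?size_iota // nth_iota // nth_take // nth_drop.
by apply: u_phi_pow; lia.
Qed.

Lemma spacedM_phi_pow m : spacedM (p ^ 2 + p) (p ^ 2 + p) (phi_pow m.+4).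
Proof.
rewrite 2!phi_powS; apply: (@spacedM_phi2 S); last by lia.
have := @path_S_before_M_phi p L (phi_pow m.+1) (path_no_SS_phi L (phi_pow m)).
by rewrite (last_cat S (nseq p L) [:: S]).
Qed.

Lemma spacedM_factor v : is_factor p v -> exists d, spacedM (p ^ 2 + p) d v.
Proof.
move=> [i [n ->]]; set m := i + n.
have Hs : i + n <= size (phi_pow m.+4) by have := size_phi_pow m.+4; lia.
have := spacedM_phi_pow m; rewrite -(cat_take_drop i (phi_pow _)).
case/spacedM_catr=> d; rewrite -(cat_take_drop n (drop i _)) => /spacedM_catl Hd.
by exists d; rewrite (factor_phi_pow Hs).
Qed.

End Substitution.

Local Open Scope ring_scope.

Theorem mainTheorem7 (p : nat) (hp : (1 < p)%N) :
  (forall v : seq letter, is_factor p v ->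
     (countM v)%:Q <= 1 + ((size v)%:Q - 1) / (p ^ 2 + p)%N%:Q)
  /\
  (forall (v : seq letter) (Delta : nat), is_factor p v ->
     ((exists k : nat, [/\ (Delta <= k)%N, (k <= size v)%N & countM (take k v) = 0%N])
      \/ (exists k : nat, [/\ (Delta <= k)%N, (k <= size v)%N & countM (drop (size v - k) v) = 0%N])) ->
     ((countM v)%:Z <= Num.ceil (((size v)%:Q - Delta%:Q) / (p ^ 2 + p)%N%:Q))).
Proof.
have := spacedM_factor hp; have : (0 < p ^ 2 + p)%N by lia.
set N := (p ^ 2 + p)%N; clearbody N; move=> N_gt0 spaced_factor.
have count_bound v Delta : is_factor p v ->
    ((Delta <= find isM v) || (Delta <= find isM (rev v)))%N ->
    (countM v)%:Q - 1 <= ((size v)%:Q - Delta%:Q - 1) / N%:Q.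
  move=> /spaced_factor[d Hd] /(spacedM_count_border N_gt0 Hd) H.
  rewrite -!pmulrn ler_pdivlMr ?ltr0n //; move: H.
  by rewrite -(ler_nat rat) -addn1 !natrD natrM; lra.
split=> [v Hv | v Delta Hv Hk].
- by have := count_bound v 0%N Hv isT; rewrite mulr0z subr0; lra.
- rewrite -ltzD1 -ltrBlDr ceil_gt_int rmorphB /= rmorph1.
  apply: le_lt_trans (count_bound v Delta Hv _) _; last first.
    by rewrite ltr_pM2r ?invr_gt0 ?ltr0n //; lra.
  by case: Hk => -[k [H1 H2 H3]];
    [rewrite (leq_trans H1 (find_isM_take H2 H3))
    | rewrite (leq_trans H1 (find_isM_rev_drop H2 H3)) orbT].
Qed.
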